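(* Let $k\ge2$ and $n\ge1$. In the position-randomized auction setting described in the context, fix an initial bid sequence $a_1,\dots,a_n$ of ${\mathcal A}$ and a common initial bid sequence $b_1,\dots,b_n$ of the disadvantaged bidders such that $a_i\ne b_j$ for all $i,j$. Let $W_1$ be the expected number of objects ${\mathcal A}$ wins when ${\mathcal A}$ uses the uniform distribution on permutations and the disadvantaged bidders use some (arbitrary, common) distribution on permutations; $W_2$ be the expected number of objects ${\mathcal A}$ wins when ${\mathcal A}$ does not permute his initial sequence (bids $a_i$ on object $i$) and the disadvantaged bidders use the uniform distribution; $W_3$ be the expected number of objects ${\mathcal A}$ wins when ${\mathcal A}$ uses an arbitrary given distribution on permutations and the disadvantaged bidders use the uniform distribution. Then $W_1\ge W_2=W_3$.
   Context: Auction model: there are $k$ bidders, one adversary ${\mathcal A}$ and $k-1$ disadvantaged bidders, and $n$ objects auctioned simultaneously. Each object is won by the highest bidder on it; if $m$ bidders tie for the highest bid, each wins with probability $1/m$. A position-randomized bidding algorithm: a bidder chooses an initial sequence $x_1,\dots,x_n$ of positive reals (with $\sum x_j\le1$) and a probability distribution on permutations $\sigma$ of $\{1,\dots,n\}$; he draws $\sigma$ and bids $x_j$ on object $\sigma(j)$. All disadvantaged bidders use the same initial sequence and the same permutation distribution, drawing their permutations independently of each other; ${\mathcal A}$'s permutation is drawn independently of theirs. *)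

From mathcomp Require Import all_boot all_order all_algebra all_fingroup.
Set Implicit Arguments. Unset Strict Implicit. Unset Printing Implicit Defensive.
Import Order.TTheory GRing.Theory Num.Theory.
Local Open Scope ring_scope.

Section Auction.
Variable R : realFieldType.

Definition is_perm_distr (n : nat) (p : {perm 'I_n} -> R) : Prop :=
  (forall s, 0 <= p s) /\ \sum_(s : {perm 'I_n}) p s = 1.

Definition unif_perm (n : nat) : {perm 'I_n} -> R := fun _ => 1 / (n`!)%:R.

Definition id_perm_distr (n : nat) : {perm 'I_n} -> R :=
  fun s => if s == 1%g then 1 else 0.

(* A bidder with initial sequence x and permutation s bids x j on object s j,
   i.e. bids x (s^-1 o) on object o. *)
Definition bid (n : nat) (x : 'I_n -> R) (s : {perm 'I_n}) (o : 'I_n) : R :=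
  x ((s^-1)%g o).

(* probability that the adversary, bidding bA, wins an object against the
   other bids bs (ties among m highest bidders broken uniformly, 1/m each) *)
Definition adv_win_prob (m : nat) (bA : R) (bs : 'I_m -> R) : R :=
  if [forall i, bs i <= bA]
  then 1 / (1 + #|[set i | bs i == bA]|)%:R
  else 0.

(* Expected number of objects won by the adversary, with k bidders in total
   (the adversary and k-1 disadvantaged ones), adversary initial sequence a
   with permutation distribution pA, disadvantaged common sequence b with
   common permutation distribution pD, permutations drawn independently. *)
Definition expected_wins (n k : nat) (a b : 'I_n -> R)
    (pA pD : {perm 'I_n} -> R) : R :=
  \sum_(sA : {perm 'I_n}) \sum_(t : {ffun 'I_(k.-1) -> {perm 'I_n}})
     pA sA * (\prod_(i < k.-1) pD (t i)) *
     \sum_(o : 'I_n) adv_win_prob (bid a sA o) (fun i => bid b (t i) o).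

End Auction.

From mathcomp Require Import all_boot all_order all_algebra all_fingroup.
From mathcomp Require Import ring.
Set Implicit Arguments. Unset Strict Implicit. Unset Printing Implicit Defensive.
Import Order.TTheory GRing.Theory Num.Theory.
Local Open Scope ring_scope.

(* As no bid of A equals a bid of a disadvantaged bidder there are no ties, so A
   wins object o with bid x iff each of the k-1 independent disadvantaged bids on
   o is below x, which happens with probability G(o,x)^(k-1), where G(o,x)
   ([below_prob]) is the probability that a single disadvantaged bidder bids
   below x on o.  Against uniformly permuting opponents G(o,x) = N(x)/n with
   N(x) = #{j | b_j < x} ([count_below]), whatever o is, so A expects
   sum_j (N(a_j)/n)^(k-1) wins however he permutes: W2 = W3.  If instead A permutes uniformly, averaging over his permutation gives
   W1 = (1/n) sum_j sum_o G(o,a_j)^(k-1); since sum_o G(o,x) = N(x) for every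
   opponent distribution, the power-mean inequality yields W1 >= W2. *)

Lemma sumr_perm (T : finType) (V : nmodType) (s : {perm T}) (F : T -> V) :
  \sum_x F (s x) = \sum_x F x.
Proof. by rewrite [RHS](reindex_inj (@perm_inj _ s)). Qed.

Lemma card_perm_type (T : finType) : #|{perm T}| = #|T|`!.
Proof.
rewrite -cardsT -card_perm; apply: eq_card => s.
by rewrite !inE; apply/esym/subsetP => x; rewrite inE.
Qed.

Lemma sum_perm_inv_at (T : finType) (V : nmodType) (F : T -> V) (x : T) :
  (\sum_(s : {perm T}) F ((s^-1)%g x)) *+ #|T| = (\sum_y F y) *+ #|T|`!.
Proof.
have indep y : \sum_(s : {perm T}) F ((s^-1)%g x) = \sum_(s : {perm T}) F ((s^-1)%g y).
  rewrite (reindex_inj (mulIg (tperm x y))) /=.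
  by apply: eq_bigr => s _; rewrite invgM tpermV permM tpermL.
transitivity (\sum_y \sum_(s : {perm T}) F ((s^-1)%g y)).
  under [RHS]eq_bigr => y _ do rewrite -indep.
  by rewrite sumr_const.
rewrite exchange_big /=.
under eq_bigr => s _ do rewrite (sumr_perm (s^-1)%g F).
by rewrite sumr_const card_perm_type.
Qed.

Lemma sum_ffun_prod (R : comPzSemiRingType) (T : finType) (m : nat) (F : T -> R) :
  \sum_(t : {ffun 'I_m -> T}) \prod_i F (t i) = (\sum_x F x) ^+ m.
Proof. by rewrite -(bigA_distr_bigA (fun _ => F)) prodr_const card_ord. Qed.

Lemma chebyshev_sum (R : numDomainType) (I : finType) (f g : I -> R) :
  (forall i j, 0 <= (f i - f j) * (g i - g j)) ->
  (\sum_i f i) * (\sum_i g i) <= #|I|%:R * \sum_i f i * g i.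
Proof.
move=> similar.
have half : \sum_i \sum_j (f i * g i - f i * g j) =
    #|I|%:R * (\sum_i f i * g i) - (\sum_i f i) * (\sum_i g i).
  rewrite mulr_natl -sumrMnl mulr_suml -sumrB; apply: eq_bigr => i _.
  by rewrite sumrB sumr_const mulr_sumr.
have double : \sum_i \sum_j (f i - f j) * (g i - g j) =
    (\sum_i \sum_j (f i * g i - f i * g j)) *+ 2.
  rewrite mulr2n [X in _ = _ + X]exchange_big -big_split /=.
  by apply: eq_bigr => i _; rewrite -big_split; apply: eq_bigr => j _ /=; ring.
rewrite -subr_ge0 -half -(pmulrn_lge0 _ (isT : (0 < 2)%N)) -double.
by apply: sumr_ge0 => i _; apply: sumr_ge0 => j _; exact: similar.
Qed.

Lemma pow_mean_sum (R : realDomainType) (I : finType) (y : I -> R) (m : nat) :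
  (forall i, 0 <= y i) ->
  (\sum_i y i) ^+ m * #|I|%:R <= #|I|%:R ^+ m * \sum_i y i ^+ m.
Proof.
move=> y_ge0; elim: m => [|m IHm]; first by rewrite !expr0 !mul1r sumr_const.
have y_mono i j : 0 <= (y i - y j) * (y i ^+ m - y j ^+ m).
  have yX_mono u v : y u <= y v -> y u ^+ m <= y v ^+ m.
    by apply: lerXn2r; rewrite nnegrE.
  have [le_ij|/ltW le_ji] := leP (y i) (y j).
    by rewrite -mulrNN !opprB mulr_ge0 // subr_ge0 // yX_mono.
  by rewrite mulr_ge0 // subr_ge0 // yX_mono.
have sum_ge0 : 0 <= \sum_i y i by apply: sumr_ge0.
rewrite exprS -mulrA (le_trans (ler_wpM2l sum_ge0 IHm)) //.
rewrite mulrCA exprSr -mulrA ler_wpM2l ?exprn_ge0 //.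
by under [X in _ <= _ * X]eq_bigr => i _ do rewrite exprS; exact: chebyshev_sum.
Qed.

Lemma pow_mean_le (R : realFieldType) (I : finType) (y : I -> R) (m : nat) :
  (0 < #|I|)%N -> (forall i, 0 <= y i) ->
  ((\sum_i y i) / #|I|%:R) ^+ m <= (\sum_i y i ^+ m) / #|I|%:R.
Proof.
move=> I_gt0 y_ge0; have cardI_gt0 : 0 < #|I|%:R :> R by rewrite ltr0n.
rewrite expr_div_n ler_pdivrMr ?exprn_gt0 // mulrAC ler_pdivlMr //.
by rewrite [X in _ <= X]mulrC pow_mean_sum.
Qed.

Section Auction.
Variable R : realFieldType.

Definition lt_ind (x y : R) : R := if x < y then 1 else 0.

Lemma lt_ind_ge0 (x y : R) : 0 <= lt_ind x y.
Proof. by rewrite /lt_ind; case: ifP. Qed.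

Lemma adv_win_prob_distinct (m : nat) (bA : R) (bs : 'I_m -> R) :
  (forall i, bs i != bA) -> adv_win_prob bA bs = \prod_i lt_ind (bs i) bA.
Proof.
move=> bs_neq; rewrite /adv_win_prob; case: ifPn => [/forallP bs_le|/forallPn [i bs_gt]].
  have -> : [set i | bs i == bA] = set0.
    by apply/setP => i; rewrite !inE (negbTE (bs_neq i)).
  rewrite cards0 addn0 divr1; apply/esym/big1 => i _.
  by rewrite /lt_ind lt_neqAle bs_neq bs_le.
rewrite (bigD1 i) //= /lt_ind ifF ?mul0r //.
by apply/negbTE; apply: contra bs_gt => /ltW.
Qed.

Variable n : nat.

Lemma sum_unif_perm_inv_at (F : 'I_n -> R) (x : 'I_n) :
  \sum_s @unif_perm R n s * F ((s^-1)%g x) = (\sum_y F y) / n%:R.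
Proof.
have n_gt0 : (0 < n)%N := leq_ltn_trans (leq0n x) (ltn_ord x).
have n_neq0 : n%:R != 0 :> R by rewrite pnatr_eq0 -lt0n.
have fact_neq0 : n`!%:R != 0 :> R by rewrite pnatr_eq0 -lt0n fact_gt0.
have sum_eq : (\sum_(s : {perm 'I_n}) F ((s^-1)%g x)) * n%:R = (\sum_y F y) * n`!%:R.
  by rewrite !mulr_natr; have := sum_perm_inv_at F x; rewrite card_ord.
rewrite /unif_perm -mulr_sumr -[X in _ * X](mulfK n_neq0) sum_eq.
by field; rewrite n_neq0 fact_neq0.
Qed.

Definition below_prob (pD : {perm 'I_n} -> R) (b : 'I_n -> R) (o : 'I_n) (x : R) : R :=
  \sum_s pD s * lt_ind (bid b s o) x.

Definition count_below (b : 'I_n -> R) (x : R) : R := \sum_j lt_ind (b j) x.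

Lemma sum_below_prob (pD : {perm 'I_n} -> R) (b : 'I_n -> R) (x : R) :
  \sum_s pD s = 1 -> \sum_o below_prob pD b o x = count_below b x.
Proof.
move=> pD_sum1; rewrite exchange_big /=.
under eq_bigr => s _ do rewrite -mulr_sumr (sumr_perm (s^-1)%g (fun j => lt_ind (b j) x)).
by rewrite -mulr_suml pD_sum1 mul1r.
Qed.

Lemma expected_winsE (k : nat) (a b : 'I_n -> R) (pA pD : {perm 'I_n} -> R) :
  (forall i j, a i != b j) ->
  expected_wins k a b pA pD =
    \sum_sA pA sA * \sum_o below_prob pD b o (bid a sA o) ^+ k.-1.
Proof.
move=> hab; apply: eq_bigr => sA _.
under eq_bigr => t _ do rewrite -mulrA.
rewrite -mulr_sumr; congr (_ * _).
under eq_bigr => t _ do rewrite mulr_sumr.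
rewrite exchange_big /=; apply: eq_bigr => o _.
under eq_bigr => t _.
  rewrite adv_win_prob_distinct => [|i]; last by rewrite eq_sym hab.
  by rewrite -big_split /=; over.
exact: sum_ffun_prod.
Qed.

Lemma expected_wins_unif (k : nat) (a b : 'I_n -> R) (pA : {perm 'I_n} -> R) :
  (forall i j, a i != b j) ->
  expected_wins k a b pA (@unif_perm R n) =
    (\sum_s pA s) * \sum_j (count_below b (a j) / n%:R) ^+ k.-1.
Proof.
move=> hab; rewrite expected_winsE // mulr_suml; apply: eq_bigr => sA _.
congr (_ * _); rewrite /below_prob /bid.
under eq_bigr => o _ do rewrite (sum_unif_perm_inv_at (fun j => lt_ind (b j) _)).
exact: (sumr_perm (sA^-1)%g (fun j => (count_below b (a j) / n%:R) ^+ k.-1)).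
Qed.

Lemma expected_wins_unif_ge (k : nat) (a b : 'I_n -> R) (pD : {perm 'I_n} -> R) :
  (0 < n)%N -> is_perm_distr pD -> (forall i j, a i != b j) ->
  \sum_j (count_below b (a j) / n%:R) ^+ k.-1 <= expected_wins k a b (@unif_perm R n) pD.
Proof.
move=> n_gt0 [pD_ge0 pD_sum1] hab.
have -> : expected_wins k a b (@unif_perm R n) pD =
    \sum_j (\sum_o below_prob pD b o (a j) ^+ k.-1) / n%:R.
  rewrite expected_winsE //.
  under eq_bigr => sA _ do rewrite mulr_sumr.
  rewrite exchange_big /=.
  under eq_bigr => o _ do
    rewrite /bid (sum_unif_perm_inv_at (fun j => below_prob pD b o (a j) ^+ k.-1)).
  by rewrite -mulr_suml exchange_big mulr_suml.
apply: ler_sum => j _.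
rewrite -(sum_below_prob b (a j) pD_sum1).
have G_ge0 o : 0 <= below_prob pD b o (a j).
  by apply: sumr_ge0 => s _; rewrite mulr_ge0 ?lt_ind_ge0.
by have := @pow_mean_le R _ (fun o => below_prob pD b o (a j)) k.-1; rewrite card_ord; apply.
Qed.

Lemma id_perm_distrP : is_perm_distr (@id_perm_distr R n).
Proof.
split=> [s|]; first by rewrite /id_perm_distr; case: ifP.
by rewrite (bigD1 1%g) //= /id_perm_distr eqxx big1 ?addr0 // => s /negbTE ->.
Qed.

End Auction.

Theorem lemma4p1 (R : realFieldType) (k n : nat) (hk : (2 <= k)%N) (hn : (1 <= n)%N)
    (a b : 'I_n -> R)
    (ha_pos : forall i, 0 < a i) (ha_sum : \sum_(i < n) a i <= 1)
    (hb_pos : forall i, 0 < b i) (hb_sum : \sum_(i < n) b i <= 1)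
    (hab : forall i j, a i != b j)
    (pD : {perm 'I_n} -> R) (hpD : is_perm_distr pD)
    (pA : {perm 'I_n} -> R) (hpA : is_perm_distr pA) :
  let W1 := expected_wins k a b (@unif_perm R n) pD in
  let W2 := expected_wins k a b (@id_perm_distr R n) (@unif_perm R n) in
  let W3 := expected_wins k a b pA (@unif_perm R n) in
  W2 <= W1 /\ W2 = W3.
Proof.
move=> W1 W2 W3.
have W2E : W2 = \sum_j (count_below b (a j) / n%:R) ^+ k.-1.
  by rewrite /W2 expected_wins_unif // (id_perm_distrP R n).2 mul1r.
split; first by rewrite W2E expected_wins_unif_ge.
by rewrite W2E /W3 expected_wins_unif // hpA.2 mul1r.
Qed.
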